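(* Let $(X,\Gamma)$ be a $(\mu,\nu)$-path system space. For every $\delta\ge0$ and $\eta\ge0$ there exist $\theta\ge0$ and a function $\zeta\colon\mathbb R_{\ge0}\times\mathbb R_{\ge0}\to\mathbb R_{\ge0}$ with the following property. Let $\pi_A\colon X\to A$ be a $\delta$-constricting map and let $Y\subseteq X$ be $\eta$-quasi-convex. Then for all $\varepsilon_1,\varepsilon_2\ge0$, $$\operatorname{diam}_A(Y)\le \operatorname{diam}(A^{+\theta+\varepsilon_1}\cap Y^{+\varepsilon_2})+\zeta(\varepsilon_1,\varepsilon_2)\quad\text{and}\quad \operatorname{diam}(A^{+\theta+\varepsilon_1}\cap Y^{+\varepsilon_2})\le\operatorname{diam}_A(Y)+\zeta(\varepsilon_1,\varepsilon_2).$$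
   Context: A path is a rectifiable continuous map $\alpha\colon[a,b]\to X$ parametrised by arc length; it is a $(\kappa,\lambda)$-quasi-geodesic if $d(\alpha(t),\alpha(t'))\le|t-t'|\le\kappa d(\alpha(t),\alpha(t'))+\lambda$. A $(\mu,\nu)$-path system space $(X,\Gamma)$ is a geodesic metric space $X$ with a collection $\Gamma$ of paths closed under subpaths, such that any two points are joined by an element of $\Gamma$ and every element is a $(\mu,\nu)$-quasi-geodesic. $Y^{+\eta}=\{x\in X: d(x,Y)\le\eta\}$. A subset $Y$ is $\eta$-quasi-convex if every $\gamma\in\Gamma$ with endpoints in $Y$ lies in $Y^{+\eta}$. A map $\pi_A\colon X\to A$ onto a subset $A$ is $\delta$-constricting if (CS1) $d(x,\pi_A(x))\le\delta$ for $x\in A$, and (CS2) for all $x,y\in X$ and $\gamma\in\Gamma$ joining $x$ to $y$, if $d(\pi_A(x),\pi_A(y))>\delta$ then $\gamma$ meets $B_X(\pi_A(x),\delta)$ and $B_X(\pi_A(y),\delta)$. $\operatorname{diam}_A(Y)=\operatorname{diam}(\pi_A(Y))$; the diameter of the empty set is $0$. *)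

From Stdlib Require Import Reals List Sorted.
From Coquelicot Require Import Coquelicot.
Open Scope R_scope.

Section Defs.
Variable X : Type.
Variable d : X -> X -> R.

Definition is_metric : Prop :=
  (forall x y, 0 <= d x y) /\
  (forall x y, d x y = 0 <-> x = y) /\
  (forall x y, d x y = d y x) /\
  (forall x y z, d x z <= d x y + d y z).

Definition is_geodesic_space : Prop :=
  forall x y, exists g : R -> X,
    g 0 = x /\ g (d x y) = y /\
    (forall s t, 0 <= s <= d x y -> 0 <= t <= d x y ->
       d (g s) (g t) = Rabs (s - t)).

(** A path alpha : [a,b] -> X, represented by its endpoints and a map
    R -> X of which only the values on [a,b] matter. *)
Record path := mkPath { p_a : R; p_b : R; p_f : R -> X }.

Fixpoint chain_sum (f : R -> X) (l : list R) : R :=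
  match l with
  | x :: ((y :: _) as l') => d (f x) (f y) + chain_sum f l'
  | _ => 0
  end.

Definition is_partition (s t : R) (l : list R) : Prop :=
  l <> nil /\ hd 0 l = s /\ last l 0 = t /\ LocallySorted Rle l.

Definition arc_length (f : R -> X) (s t : R) : Rbar :=
  Lub_Rbar (fun r => exists l, is_partition s t l /\ r = chain_sum f l).

Definition continuous_on_interval (f : R -> X) (a b : R) : Prop :=
  forall t, a <= t <= b -> forall eps, 0 < eps -> exists del, 0 < del /\
    forall t', a <= t' <= b -> Rabs (t - t') < del -> d (f t) (f t') < eps.

Definition rectifiable (p : path) : Prop :=
  exists L : R, arc_length (p_f p) (p_a p) (p_b p) = Finite L.

Definition arc_length_parametrised (p : path) : Prop :=
  forall s t, p_a p <= s -> s <= t -> t <= p_b p ->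
    arc_length (p_f p) s t = Finite (t - s).

Definition is_path (p : path) : Prop :=
  p_a p <= p_b p /\ continuous_on_interval (p_f p) (p_a p) (p_b p) /\
  rectifiable p /\ arc_length_parametrised p.

Definition quasi_geodesic (kappa lambda : R) (p : path) : Prop :=
  forall t t', p_a p <= t <= p_b p -> p_a p <= t' <= p_b p ->
    d (p_f p t) (p_f p t') <= Rabs (t - t') /\
    Rabs (t - t') <= kappa * d (p_f p t) (p_f p t') + lambda.

Definition joins (p : path) (x y : X) : Prop :=
  p_f p (p_a p) = x /\ p_f p (p_b p) = y.

Definition path_system_space (mu nu : R) (Gamma : path -> Prop) : Prop :=
  is_metric /\ is_geodesic_space /\
  (forall p, Gamma p -> is_path p) /\
  (forall p s t, Gamma p -> p_a p <= s -> s <= t -> t <= p_b p ->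
      Gamma (mkPath s t (p_f p))) /\
  (forall x y, exists p, Gamma p /\ joins p x y) /\
  (forall p, Gamma p -> quasi_geodesic mu nu p).

(** Distance from a point to a set (inf, = +oo for the empty set). *)
Definition dist_set (x : X) (Y : X -> Prop) : Rbar :=
  Glb_Rbar (fun r => exists y, Y y /\ r = d x y).

Definition nbhd (Y : X -> Prop) (eta : R) : X -> Prop :=
  fun x => Rbar_le (dist_set x Y) (Finite eta).

(** Diameter, with diam(empty) = 0 (since d x x = 0 the extra 0 does not
    change the supremum of a nonempty set). *)
Definition diam (S : X -> Prop) : Rbar :=
  Lub_Rbar (fun r => r = 0 \/ exists x y, S x /\ S y /\ r = d x y).

Definition quasi_convex (Gamma : path -> Prop) (eta : R) (Y : X -> Prop) : Prop :=
  forall p, Gamma p -> Y (p_f p (p_a p)) -> Y (p_f p (p_b p)) ->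
    forall t, p_a p <= t <= p_b p -> nbhd Y eta (p_f p t).

Definition meets_ball (p : path) (c : X) (r : R) : Prop :=
  exists t, p_a p <= t <= p_b p /\ d (p_f p t) c <= r.

Definition constricting (Gamma : path -> Prop) (delta : R)
    (A : X -> Prop) (pi : X -> X) : Prop :=
  (forall x, A (pi x)) /\
  (forall x, A x -> d x (pi x) <= delta) /\
  (forall x y p, Gamma p -> joins p x y -> d (pi x) (pi y) > delta ->
     meets_ball p (pi x) delta /\ meets_ball p (pi y) delta).

Definition image (pi : X -> X) (Y : X -> Prop) : X -> Prop :=
  fun z => exists y, Y y /\ z = pi y.

Definition diam_proj (pi : X -> X) (Y : X -> Prop) : Rbar := diam (image pi Y).

Definition inter (S T : X -> Prop) : X -> Prop := fun x => S x /\ T x.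

End Defs.

(* By (CS2) a delta-constricting map is coarsely Lipschitz, since a Gamma-path
   from x to y has length at most mu d(x,y) + nu.  So a point within theta of A
   is boundedly close to its projection, and a point near Y projects boundedly
   close to the projection of a nearest point of Y: this bounds the diameter of
   A^{+theta} near Y by diam_A(Y).  Conversely, if pi y and pi y' are far apart,
   the path from y to y' meets the delta-balls around them at points which, by
   quasi-convexity, are eta-close to Y; with theta = delta + eta + 1 these lie
   in A^{+theta} near Y at distance about d(pi y, pi y'). *)
From Stdlib Require Import Reals Lra Classical.
From Coquelicot Require Import Coquelicot.
Open Scope R_scope.

Lemma Rbar_le_plus_finite (D : Rbar) (a b c : R) :
  Rbar_le (Finite a) D -> b <= a + c -> Rbar_le (Finite b) (Rbar_plus D (Finite c)).
Proof. destruct D as [m| |]; simpl; intros; lra || auto. Qed.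

Section DiameterAndDistance.
Variables (X : Type) (d : X -> X -> R).

Lemma dist_set_le_mem (x z : X) (Y : X -> Prop) :
  Y z -> Rbar_le (dist_set X d x Y) (Finite (d x z)).
Proof.
  intros Yz. apply (Glb_Rbar_correct (fun r => exists y, Y y /\ r = d x y)).
  now exists z.
Qed.

(* The infimum need not be attained; the slack 1 is arbitrary. *)
Lemma dist_set_le_witness (x : X) (Y : X -> Prop) (r : R) :
  Rbar_le (dist_set X d x Y) (Finite r) -> exists z, Y z /\ d x z <= r + 1.
Proof.
  intros Hle. apply NNPP; intros Hnone.
  assert (Hlb : is_lb_Rbar (fun s => exists y, Y y /\ s = d x y) (Finite (r + 1))).
  { intros s [y [Yy ->]]. simpl.
    destruct (Rle_dec (d x y) (r + 1)); [exfalso; eauto | lra]. }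
  pose proof (proj2 (Glb_Rbar_correct _) _ Hlb) as Hglb.
  pose proof (Rbar_le_trans _ _ _ Hglb Hle) as Hcontra. simpl in Hcontra. lra.
Qed.

Lemma diam_ge0 (S : X -> Prop) : Rbar_le (Finite 0) (diam X d S).
Proof.
  apply (Lub_Rbar_correct (fun r => r = 0 \/ exists x y, S x /\ S y /\ r = d x y)).
  now left.
Qed.

Lemma diam_ge_dist (S : X -> Prop) (x y : X) :
  S x -> S y -> Rbar_le (Finite (d x y)) (diam X d S).
Proof.
  intros Sx Sy.
  apply (Lub_Rbar_correct (fun r => r = 0 \/ exists x y, S x /\ S y /\ r = d x y)).
  right; eauto.
Qed.

Lemma diam_le (S : X -> Prop) (B : Rbar) :
  (forall x y, S x -> S y -> Rbar_le (Finite (d x y)) B) -> Rbar_le (Finite 0) B ->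
  Rbar_le (diam X d S) B.
Proof.
  intros Hdist H0.
  apply (Lub_Rbar_correct (fun r => r = 0 \/ exists x y, S x /\ S y /\ r = d x y)).
  intros s [-> | [x [y [Sx [Sy ->]]]]]; auto.
Qed.

End DiameterAndDistance.

Section ConstrictingMaps.
Variables (X : Type) (d : X -> X -> R).
Hypothesis d_ge0 : forall x y, 0 <= d x y.
Hypothesis d_refl : forall x, d x x = 0.
Hypothesis d_sym : forall x y, d x y = d y x.
Hypothesis d_triangle : forall x y z, d x z <= d x y + d y z.

Variables (mu nu : R) (Gamma : path X -> Prop).
Hypothesis Gamma_joins : forall x y, exists p, Gamma p /\ joins X p x y.
Hypothesis Gamma_quasi_geodesic : forall p, Gamma p -> quasi_geodesic X d mu nu p.

Lemma path_points_dist_le (p : path X) (x y : X) (t t' : R) :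
  Gamma p -> joins X p x y ->
  p_a X p <= t <= p_b X p -> p_a X p <= t' <= p_b X p ->
  d (p_f X p t) (p_f X p t') <= Rabs mu * d x y + Rabs nu.
Proof.
  intros Gp [<- <-] Ht Ht'.
  destruct (Gamma_quasi_geodesic p Gp t t' Ht Ht') as [Htt' _].
  destruct (Gamma_quasi_geodesic p Gp (p_a X p) (p_b X p)) as [_ Hab]; try lra.
  assert (Rabs (t - t') <= Rabs (p_a X p - p_b X p)).
  { unfold Rabs; destruct (Rcase_abs (t - t')), (Rcase_abs (p_a X p - p_b X p)); lra. }
  assert (mu * d (p_f X p (p_a X p)) (p_f X p (p_b X p))
          <= Rabs mu * d (p_f X p (p_a X p)) (p_f X p (p_b X p))).
  { apply Rmult_le_compat_r; [apply d_ge0 | apply Rle_abs]. }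
  pose proof (Rle_abs nu). lra.
Qed.

Variables (delta : R) (A : X -> Prop) (pi : X -> X).
Hypothesis pi_constricting : constricting X d Gamma delta A pi.

Definition proj_bound (s : R) : R := 3 * delta + Rabs mu * s + Rabs nu.

Lemma proj_bound_le (s s' : R) : s <= s' -> proj_bound s <= proj_bound s'.
Proof.
  intros Hs. unfold proj_bound.
  pose proof (Rmult_le_compat_l _ _ _ (Rabs_pos mu) Hs). lra.
Qed.

Hypothesis delta_ge0 : 0 <= delta.

Lemma proj_bound_ge0 (s : R) : 0 <= s -> 0 <= proj_bound s.
Proof.
  intros Hs. unfold proj_bound.
  pose proof (Rmult_le_pos _ _ (Rabs_pos mu) Hs). pose proof (Rabs_pos nu). lra.
Qed.

(* For far-apart projections, (CS2) puts two points of a Gamma-path from x to y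
   within delta of pi x and pi y respectively. *)
Lemma constricting_proj_dist_le (x y : X) : d (pi x) (pi y) <= proj_bound (d x y).
Proof.
  destruct pi_constricting as [_ [_ Hmeet]].
  destruct (Rle_dec (d (pi x) (pi y)) delta) as [Hclose | Hfar].
  - unfold proj_bound. pose proof (Rmult_le_pos _ _ (Rabs_pos mu) (d_ge0 x y)).
    pose proof (Rabs_pos nu). lra.
  - destruct (Gamma_joins x y) as [p [Gp Jp]].
    destruct (Hmeet x y p Gp Jp) as [[t [Ht Hpt]] [t' [Ht' Hpt']]]; [lra |].
    pose proof (path_points_dist_le p x y t t' Gp Jp Ht Ht').
    pose proof (d_triangle (pi x) (p_f X p t) (pi y)).
    pose proof (d_triangle (p_f X p t) (p_f X p t') (pi y)).
    pose proof (d_sym (pi x) (p_f X p t)). unfold proj_bound. lra.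
Qed.

Lemma constricting_dist_proj_le (x : X) (r : R) :
  Rbar_le (dist_set X d x A) (Finite r) ->
  d x (pi x) <= r + 1 + delta + proj_bound (r + 1).
Proof.
  intros Hx. destruct pi_constricting as [_ [HAd _]].
  destruct (dist_set_le_witness X d x A r Hx) as [a [Aa Hxa]].
  pose proof (HAd a Aa). pose proof (constricting_proj_dist_le x a).
  pose proof (proj_bound_le _ _ Hxa).
  pose proof (d_triangle x a (pi x)). pose proof (d_triangle a (pi a) (pi x)).
  pose proof (d_sym (pi a) (pi x)). lra.
Qed.

Variables (eta : R) (Y : X -> Prop).
Hypothesis Y_quasi_convex : quasi_convex X d Gamma eta Y.

Lemma constricting_far_proj_near_Y (y y' : X) :
  Y y -> Y y' -> d (pi y) (pi y') > delta ->
  exists z z', Y z /\ Y z' /\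
    d z (pi y) <= delta + eta + 1 /\ d z' (pi y') <= delta + eta + 1.
Proof.
  intros Yy Yy' Hfar. destruct pi_constricting as [_ [_ Hmeet]].
  destruct (Gamma_joins y y') as [p [Gp Jp]].
  destruct (Hmeet y y' p Gp Jp Hfar) as [[t [Ht Hpt]] [t' [Ht' Hpt']]].
  destruct Jp as [Hpa Hpb]. rewrite <- Hpa in Yy. rewrite <- Hpb in Yy'.
  destruct (dist_set_le_witness X d _ Y eta (Y_quasi_convex p Gp Yy Yy' t Ht))
    as [z [Yz Hz]].
  destruct (dist_set_le_witness X d _ Y eta (Y_quasi_convex p Gp Yy Yy' t' Ht'))
    as [z' [Yz' Hz']].
  exists z, z'. split; [exact Yz | split; [exact Yz' |]].
  pose proof (d_triangle z (p_f X p t) (pi y)). pose proof (d_sym z (p_f X p t)).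
  pose proof (d_triangle z' (p_f X p t') (pi y')). pose proof (d_sym z' (p_f X p t')).
  lra.
Qed.

Lemma mem_inter_nbhd (z : X) (a : X) (r e : R) :
  A a -> Y z -> d z a <= r -> 0 <= e ->
  inter X (nbhd X d A r) (nbhd X d Y e) z.
Proof.
  intros Aa Yz Hza He. split.
  - eapply Rbar_le_trans; [apply (dist_set_le_mem X d z a A Aa) | exact Hza].
  - eapply Rbar_le_trans; [apply (dist_set_le_mem X d z z Y Yz) |].
    simpl. rewrite d_refl. exact He.
Qed.

Hypothesis eta_ge0 : 0 <= eta.

Lemma diam_proj_le_diam_near (e1 e2 c : R) :
  0 <= e1 -> 0 <= e2 -> 3 * delta + 2 * eta + 2 <= c ->
  Rbar_le (diam_proj X d pi Y)
    (Rbar_plus (diam X d (inter X (nbhd X d A (delta + eta + 1 + e1)) (nbhd X d Y e2)))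
               (Finite c)).
Proof.
  intros He1 He2 Hc. destruct pi_constricting as [HA _].
  apply diam_le; [| apply (Rbar_le_plus_finite _ 0); [apply diam_ge0 | lra]].
  intros x x' [y [Yy ->]] [y' [Yy' ->]].
  destruct (Rle_dec (d (pi y) (pi y')) delta) as [Hclose | Hfar].
  - apply (Rbar_le_plus_finite _ 0); [apply diam_ge0 | lra].
  - destruct (constricting_far_proj_near_Y y y' Yy Yy') as [z [z' [Yz [Yz' [Hz Hz']]]]];
      [lra |].
    apply (Rbar_le_plus_finite _ (d z z')).
    + apply diam_ge_dist.
      * apply (mem_inter_nbhd z (pi y)); auto; lra.
      * apply (mem_inter_nbhd z' (pi y')); auto; lra.
    + pose proof (d_triangle (pi y) z (pi y')). pose proof (d_triangle z z' (pi y')).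
      pose proof (d_sym z (pi y)). lra.
Qed.

Lemma diam_near_le_diam_proj (r e c : R) :
  0 <= r -> 0 <= e ->
  2 * (r + 1 + delta + proj_bound (r + 1)) + 2 * proj_bound (e + 1) <= c ->
  Rbar_le (diam X d (inter X (nbhd X d A r) (nbhd X d Y e)))
    (Rbar_plus (diam_proj X d pi Y) (Finite c)).
Proof.
  intros Hr He Hc.
  pose proof (proj_bound_ge0 (r + 1)). pose proof (proj_bound_ge0 (e + 1)).
  apply diam_le; [| apply (Rbar_le_plus_finite _ 0); [apply diam_ge0 | lra]].
  intros x x' [Ax Yx] [Ax' Yx'].
  destruct (dist_set_le_witness X d x Y e Yx) as [y [Yy Hxy]].
  destruct (dist_set_le_witness X d x' Y e Yx') as [y' [Yy' Hxy']].
  apply (Rbar_le_plus_finite _ (d (pi y) (pi y'))).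
  - apply diam_ge_dist; [exists y | exists y']; auto.
  - pose proof (constricting_dist_proj_le x r Ax).
    pose proof (constricting_dist_proj_le x' r Ax').
    pose proof (constricting_proj_dist_le x y).
    pose proof (constricting_proj_dist_le x' y').
    pose proof (proj_bound_le _ _ Hxy). pose proof (proj_bound_le _ _ Hxy').
    pose proof (d_triangle x (pi x) x'). pose proof (d_triangle (pi x) (pi y) x').
    pose proof (d_triangle (pi y) (pi y') x'). pose proof (d_triangle (pi y') (pi x') x').
    pose proof (d_sym (pi x') (pi y')). pose proof (d_sym (pi x') x'). lra.
Qed.

End ConstrictingMaps.

Theorem mainTheorem10 (X : Type) (d : X -> X -> R) (mu nu : R)
  (Gamma : path X -> Prop) :
  path_system_space X d mu nu Gamma ->
  forall delta eta : R, 0 <= delta -> 0 <= eta ->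
  exists (theta : R) (zeta : R -> R -> R),
    0 <= theta /\
    (forall e1 e2, 0 <= e1 -> 0 <= e2 -> 0 <= zeta e1 e2) /\
    forall (A : X -> Prop) (pi : X -> X) (Y : X -> Prop),
      constricting X d Gamma delta A pi ->
      quasi_convex X d Gamma eta Y ->
      forall e1 e2 : R, 0 <= e1 -> 0 <= e2 ->
        Rbar_le (diam_proj X d pi Y)
          (Rbar_plus (diam X d (inter X (nbhd X d A (theta + e1)) (nbhd X d Y e2)))
                     (Finite (zeta e1 e2))) /\
        Rbar_le (diam X d (inter X (nbhd X d A (theta + e1)) (nbhd X d Y e2)))
          (Rbar_plus (diam_proj X d pi Y) (Finite (zeta e1 e2))).
Proof.
  intros [[d_ge0 [d_zero [d_sym d_triangle]]] [_ [_ [_ [Gamma_joins Gamma_qg]]]]]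
    delta eta Hdelta Heta.
  assert (d_refl : forall x, d x x = 0) by (intro x; now apply d_zero).
  set (L := proj_bound mu nu delta).
  set (theta := delta + eta + 1).
  set (zeta := fun e1 e2 =>
    2 * (theta + e1 + 1 + delta + L (theta + e1 + 1)) + 2 * L (e2 + 1)
    + 3 * delta + 2 * eta + 2).
  assert (Hzeta : forall e1 e2, 0 <= e1 -> 0 <= e2 ->
    2 * (theta + e1 + 1 + delta + L (theta + e1 + 1)) + 2 * L (e2 + 1) <= zeta e1 e2 /\
    3 * delta + 2 * eta + 2 <= zeta e1 e2).
  { intros e1 e2 He1 He2.
    pose proof (proj_bound_ge0 mu nu delta Hdelta (theta + e1 + 1)).
    pose proof (proj_bound_ge0 mu nu delta Hdelta (e2 + 1)).
    unfold zeta, L, theta in *. split; lra. }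
  exists theta, zeta. split; [unfold theta; lra |]. split.
  { intros e1 e2 He1 He2. destruct (Hzeta e1 e2 He1 He2). lra. }
  intros A pi Y Hpi HY e1 e2 He1 He2.
  destruct (Hzeta e1 e2 He1 He2) as [Hnear Hproj]. split.
  - exact (diam_proj_le_diam_near X d d_refl d_sym d_triangle Gamma Gamma_joins
      delta A pi Hpi Hdelta eta Y HY Heta e1 e2 _ He1 He2 Hproj).
  - apply (diam_near_le_diam_proj X d d_ge0 d_sym d_triangle mu nu Gamma
      Gamma_joins Gamma_qg delta A pi Hpi Hdelta Y); unfold theta, L in *; lra.
Qed.
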